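(* Let $G$ be a graph and $S,T\subseteq V(G)$. Let $X=\partial(S)\cup(T\cap S)$ and let $H$ be a graph with $X\subseteq V(H)$ and $V(H)\cap(V(G)\setminus S)=\emptyset$ such that $B_H(X)=B_{G[S]}(X)$. Let $G'$ be the graph obtained from $G$ by replacing $G[S]$ with $H$ (that is, $V(G')=(V(G)\setminus S)\cup V(H)$ and $E(G')$ consists of the edges of $G$ not having both endpoints in $S$ together with $E(H)$). Then $B_G(T)=B_{G'}(T)$.
   Context: $\partial(S)$ is the set of vertices of $S$ having at least one neighbor in $V(G)\setminus S$. For a graph $Y$ and $Z\subseteq V(Y)$, $B_Y(Z)$ is the set of subsets $Z'\subseteq Z$ such that there is a bipartition of $Y$ (proper $2$-coloring) with all of $Z'$ in one part and all of $Z\setminus Z'$ in the other; $B_Y(Z)=\emptyset$ if $Y$ is not bipartite. *)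

From mathcomp Require Import all_boot.
Set Implicit Arguments. Unset Strict Implicit. Unset Printing Implicit Defensive.

(* A finite simple graph on an ambient finite type T is given by its vertex
   set V : {set T} and an adjacency relation e : rel T which is symmetric,
   irreflexive and only relates vertices of V. *)
Definition is_graph (T : finType) (V : {set T}) (e : rel T) : Prop :=
  symmetric e /\ irreflexive e /\ (forall x y, e x y -> (x \in V) && (y \in V)).

Definition induced_adj (T : finType) (e : rel T) (S : {set T}) : rel T :=
  [rel x y | [&& e x y, x \in S & y \in S]].

Definition boundary (T : finType) (V : {set T}) (e : rel T) (S : {set T}) : {set T} :=
  [set x in S | [exists y in V :\: S, e x y]].

Definition proper2 (T : finType) (V : {set T}) (e : rel T) (c : {ffun T -> bool}) : bool :=
  [forall x in V, forall y in V, e x y ==> (c x != c y)].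

(* B_Y(Z): subsets Z' of Z such that some bipartition of Y puts Z' in one
   part and Z \ Z' in the other.  (Empty when Y is not bipartite.) *)
Definition Bsets (T : finType) (V : {set T}) (e : rel T) (Z : {set T}) : {set {set T}} :=
  [set Z' : {set T} | (Z' \subset Z) &&
     [exists c : {ffun T -> bool}, proper2 V e c && [forall z in Z, c z == (z \in Z')]]].

Definition replace_verts (T : finType) (V S VH : {set T}) : {set T} := (V :\: S) :|: VH.
Definition replace_adj (T : finType) (e : rel T) (S : {set T}) (eH : rel T) : rel T :=
  [rel x y | (e x y && ~~ ((x \in S) && (y \in S))) || eH x y].

From mathcomp Require Import all_boot.

Set Implicit Arguments.
Unset Strict Implicit.
Unset Printing Implicit Defensive.

(* The graphs G and G' share the part O := V(G) \ S together with its edges,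
   and both attach to it only through X, which contains every vertex of S
   (resp. of V(H)) with a neighbour in O.  A proper 2-colouring of one graph
   restricts to the inner part G[S] (resp. H) and there it only matters
   through its colour pattern on X; as B_H(X) = B_{G[S]}(X), the inner part
   can be recoloured on the other side with the same pattern on X, and glued
   to the colouring of O.  Since T lies in O and X, the pattern on T is kept. *)

Section Colourings.

Variable T : finType.
Implicit Types (V W O S X Z : {set T}) (e : rel T) (c d : {ffun T -> bool}).

Lemma proper2P V e c :
  reflect {in V &, forall x y, e x y -> c x != c y} (proper2 V e c).
Proof.
apply: (iffP forallP) => [pc x y xV yV exy | pc x].
  by move/implyP: (pc x) => /(_ xV) /forallP /(_ y) /implyP /(_ yV) /implyP; apply.
by apply/implyP => xV; apply/forallP => y; apply/implyP => yV; apply/implyP; apply: pc.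
Qed.

Lemma proper2S V W e c : W \subset V -> proper2 V e c -> proper2 W e c.
Proof.
move=> /subsetP WV /proper2P pc; apply/proper2P => x y xW yW.
by apply: pc; apply: WV.
Qed.

Lemma eq_in_proper2 V e e' c : {in V &, e =2 e'} -> proper2 V e c = proper2 V e' c.
Proof.
move=> ee'; apply/proper2P/proper2P => pc x y xV yV.
  by rewrite -ee' //; apply: pc.
by rewrite ee' //; apply: pc.
Qed.

Lemma BsetsP V e Z Z' :
  reflect (Z' \subset Z /\ exists2 c, proper2 V e c & {in Z, forall z, c z = (z \in Z')})
          (Z' \in Bsets V e Z).
Proof.
rewrite inE; apply: (iffP andP) => -[Z'Z cZ']; split=> //.
  case/existsP: cZ' => c /andP[pc /forallP cZ]; exists c => // z zZ.
  by move/implyP: (cZ z) => /(_ zZ) /eqP.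
case: cZ' => c pc cZ; apply/existsP; exists c; rewrite pc /=.
by apply/forallP => z; apply/implyP => zZ; rewrite cZ.
Qed.

Lemma eq_in_Bsets V e e' Z : {in V &, e =2 e'} -> Bsets V e Z = Bsets V e' Z.
Proof.
move=> ee'; apply/setP => Z'; rewrite !inE; congr (_ && _).
by apply: eq_existsb => c; rewrite (eq_in_proper2 _ ee').
Qed.

Lemma colour_class_Bsets V e Z c :
  proper2 V e c -> [set z in Z | c z] \in Bsets V e Z.
Proof.
move=> pc; apply/BsetsP; split; first by apply/subsetP => z; rewrite inE => /andP[].
by exists c => // z zZ; rewrite inE zZ.
Qed.

Definition glue O c d : {ffun T -> bool} := [ffun x => if x \in O then c x else d x].

Definition attached_via O W X e : Prop :=
  [/\ symmetric e, X \subset W & {in O & W :\: X, forall x y, ~~ e x y}].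

Lemma proper2_glue O W X e c d :
  attached_via O W X e ->
  {in O & O :|: X, forall x y, e x y -> c x != c y} ->
  proper2 W e d -> {in X, c =1 d} ->
  proper2 (O :|: W) e (glue O c d).
Proof.
move=> [e_sym _ no_stray] pcO /proper2P pdW cd.
have cross x y : x \in O -> y \in O :|: W -> e x y -> glue O c d x != glue O c d y.
  move=> xO yOW exy; rewrite !ffunE xO.
  case: ifP => yO; first by apply: pcO; rewrite // inE yO.
  have yX : y \in X.
    apply: contraLR exy => yX; apply: no_stray => //.
    by rewrite inE yX; move: yOW; rewrite inE yO.
  by rewrite -cd //; apply: pcO; rewrite // inE yX orbT.
apply/proper2P => x y xOW yOW exy.
case xO: (x \in O); first exact: cross.
case yO: (y \in O); first by rewrite eq_sym; apply: cross; rewrite // e_sym.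
move: xOW yOW; rewrite !inE xO yO /= => xW yW.
by rewrite !ffunE xO yO; apply: pdW.
Qed.

Lemma Bsets_glue_sub O W1 W2 X e1 e2 Z :
  X \subset W1 -> attached_via O W2 X e2 ->
  {in O & O :|: X, e1 =2 e2} ->
  Bsets W1 e1 X = Bsets W2 e2 X -> Z \subset O :|: X ->
  Bsets (O :|: W1) e1 Z \subset Bsets (O :|: W2) e2 Z.
Proof.
move=> XW1 att2 e12 B12 /subsetP ZOX; apply/subsetP => Z' /BsetsP[Z'Z [c pc cZ]].
have OXW1 : O :|: X \subset O :|: W1 by rewrite setUS.
have /(colour_class_Bsets X) : proper2 W1 e1 c by apply: proper2S pc; apply: subsetUr.
rewrite B12 => /BsetsP[_ [d pd dX]].
have cd : {in X, c =1 d} by move=> x xX; rewrite dX // inE xX.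
apply/BsetsP; split=> //; exists (glue O c d).
  apply: proper2_glue pd cd => // x y xO yOX.
  rewrite -e12 //; apply: (proper2P _ _ _ pc); first by rewrite inE xO.
  exact: (subsetP OXW1).
move=> z zZ; rewrite ffunE -cZ //.
by case: ifP => // zO; rewrite cd //; move: (ZOX z zZ); rewrite inE zO.
Qed.

Lemma Bsets_glue O W1 W2 X e1 e2 Z :
  attached_via O W1 X e1 -> attached_via O W2 X e2 ->
  {in O & O :|: X, e1 =2 e2} ->
  Bsets W1 e1 X = Bsets W2 e2 X -> Z \subset O :|: X ->
  Bsets (O :|: W1) e1 Z = Bsets (O :|: W2) e2 Z.
Proof.
move=> att1 att2 e12 B12 ZOX; apply/eqP; rewrite eqEsubset.
have [[_ XW1 _] [_ XW2 _]] := (att1, att2).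
have e21 : {in O & O :|: X, e2 =2 e1} by move=> x y xO yOX; rewrite e12.
rewrite (Bsets_glue_sub XW1 att2 e12 B12 ZOX).
exact: Bsets_glue_sub XW2 att1 e21 (esym B12) ZOX.
Qed.

Lemma induced_adj_in e S : {in S &, induced_adj e S =2 e}.
Proof. by move=> x y xS yS; rewrite /induced_adj /= xS yS !andbT. Qed.

Lemma boundary_adj V e S x y :
  x \in S -> y \in V :\: S -> e x y -> x \in boundary V e S.
Proof. by move=> xS yVS exy; rewrite inE xS; apply/existsP; exists y; rewrite yVS. Qed.

End Colourings.

Section Replacement.

Variables (T0 : finType) (V VH S X : {set T0}) (e eH : rel T0).
Hypotheses (G_graph : is_graph V e) (H_graph : is_graph VH eH).
Hypotheses (H_disjoint : VH :&: (V :\: S) = set0) (bdX : boundary V e S \subset X).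

Lemma H_notin_outside x : x \in VH -> x \in V :\: S = false.
Proof.
move=> xH; apply/negbTE/negP => xO.
by have := in_set0 x; rewrite -H_disjoint inE xH xO.
Qed.

Lemma replace_adj_outside x y : x \in V :\: S -> replace_adj e S eH x y = e x y.
Proof.
move=> xO; have [_ [_ eHV]] := H_graph.
have /negbTE xS : x \notin S by move: xO; rewrite inE => /andP[].
rewrite /replace_adj /= xS andbT; case eHxy: (eH x y); last by rewrite orbF.
by have /andP[/H_notin_outside] := eHV _ _ eHxy; rewrite xO.
Qed.

Lemma replace_adj_inside : {in VH &, replace_adj e S eH =2 eH}.
Proof.
move=> x y xH yH; have [_ [_ eV]] := G_graph.
rewrite /replace_adj /=; case exy: (e x y); last by [].
have /andP[xV yV] := eV _ _ exy.
have inS z : z \in VH -> z \in V -> z \in S.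
  by move=> zH zV; apply: contraFT (H_notin_outside zH) => zS; rewrite inE zS.
by rewrite (inS x) ?(inS y).
Qed.

Lemma attached_inside : X \subset S -> attached_via (V :\: S) S X e.
Proof.
have [e_sym _] := G_graph; split=> // x y xO /setDP[yS yX].
apply: contraNN yX => exy; apply: (subsetP bdX).
by apply: boundary_adj xO _; rewrite // e_sym.
Qed.

Lemma attached_replacement : X \subset VH -> attached_via (V :\: S) VH X (replace_adj e S eH).
Proof.
move=> XH; have [e_sym [_ eV]] := G_graph; have [eH_sym _] := H_graph.
split=> //; first by move=> x y; rewrite /replace_adj /= e_sym eH_sym [(y \in S) && _]andbC.
move=> x y xO /setDP[yH yX]; rewrite replace_adj_outside //.
apply: contraNN yX => exy; apply: (subsetP bdX); apply: boundary_adj xO _ => //.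
  have /andP[_ yV] := eV _ _ exy.
  by apply: contraFT (H_notin_outside yH) => yS; rewrite inE yS.
by rewrite e_sym.
Qed.

End Replacement.

Theorem lemma5p6 (T0 : finType) (V : {set T0}) (e : rel T0)
  (VH : {set T0}) (eH : rel T0) (S T : {set T0}) :
  is_graph V e -> is_graph VH eH ->
  S \subset V -> T \subset V ->
  boundary V e S :|: (T :&: S) \subset VH ->
  VH :&: (V :\: S) = set0 ->
  Bsets VH eH (boundary V e S :|: (T :&: S)) =
    Bsets S (induced_adj e S) (boundary V e S :|: (T :&: S)) ->
  Bsets V e T = Bsets (replace_verts V S VH) (replace_adj e S eH) T.
Proof.
move=> Ge GH SV TV XH disj HB.
set X := boundary V e S :|: (T :&: S) in XH HB *.
have bdX : boundary V e S \subset X by apply: subsetUl.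
have XS : X \subset S.
  by rewrite subUset subsetIr andbT; apply/subsetP => x; rewrite inE => /andP[].
have TOX : T \subset (V :\: S) :|: X.
  apply/subsetP => x xT; rewrite !inE (subsetP TV _ xT) xT andbT /=.
  by case: (x \in S); rewrite ?orbT.
rewrite {1}(_ : V = V :\: S :|: S); last by rewrite setUC -{1}(setIidPr SV) setID.
apply: Bsets_glue TOX.
- exact: attached_inside.
- exact: attached_replacement.
- by move=> x y xO _; rewrite (replace_adj_outside e GH disj).
- rewrite -(eq_in_Bsets _ (@induced_adj_in _ e S)) -HB.
  by rewrite (eq_in_Bsets _ (replace_adj_inside eH Ge disj)).
Qed.
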